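(* Let $\mathbf{x}_1,\dots,\mathbf{x}_n\in\mathbb{R}^p$ be observations with labels $y_i\in\{-1,1\}$, let $I_+=\{i: y_i=1\}$, $I_-=\{i:y_i=-1\}$, $n_+=|I_+|$, $n_-=|I_-|$, let $\lambda>0$, and let $\mathbf{K}\in\mathbb{R}^{n\times n}$ be the kernel matrix with entries $\mathbf{K}_{lm}=K(\mathbf{x}_l,\mathbf{x}_m)$ for a positive definite kernel $K$, with $\mathbf{k}_i$ denoting the $i$th column of $\mathbf{K}$. Suppose $\mathbf{K}=\mathbf{V}\mathbf{V}^\top$ for a real matrix $\mathbf{V}$, and let $\mathbf{v}_i$ denote the $i$th row of $\mathbf{V}$. Then the kernel ROC-SVM problem $$\min_{\boldsymbol{\theta}\in\mathbb{R}^n}\ \frac{1}{n_+n_-}\sum_{i\in I_+}\sum_{j\in I_-}\big[1-\boldsymbol{\theta}^\top(\mathbf{k}_i-\mathbf{k}_j)\big]_+ +\frac{\lambda}{2}\boldsymbol{\theta}^\top\mathbf{K}\boldsymbol{\theta}$$ is equivalent to solving the linear ROC-SVM problem $$\min_{\boldsymbol{\beta}}\ \frac{1}{n_+n_-}\sum_{i\in I_+}\sum_{j\in I_-}\big[1-\boldsymbol{\beta}^\top(\mathbf{v}_i-\mathbf{v}_j)\big]_+ +\frac{\lambda}{2}\boldsymbol{\beta}^\top\boldsymbol{\beta}.$$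
   Context: $[z]_+=\max\{z,0\}$. The first problem arises from the ROC-SVM $\min_{f\in\mathcal{H}_K}\frac{1}{n_+n_-}\sum_{i\in I_+}\sum_{j\in I_-}[1-\{f(\mathbf{x}_i)-f(\mathbf{x}_j)\}]_++\frac{\lambda}{2}\|f\|^2_{\mathcal{H}_K}$ by writing $f(\mathbf{x})=\alpha+\sum_{k=1}^n\theta_kK(\mathbf{x},\mathbf{x}_k)$, where $\mathcal{H}_K$ is the reproducing kernel Hilbert space of $K$ (the intercept $\alpha$ cancels in differences). *)

From HB Require Import structures.
From mathcomp Require Import all_boot all_order all_algebra.
From mathcomp Require Import reals.
Set Implicit Arguments. Unset Strict Implicit. Unset Printing Implicit Defensive.
Import Order.TTheory GRing.Theory Num.Theory.
Local Open Scope ring_scope.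

Section Defs.
Variable R : realType.

Definition pospart (z : R) : R := Num.max z 0.

Definition Ipos n (y : 'I_n -> R) : {set 'I_n} := [set i | y i == 1].
Definition Ineg n (y : 'I_n -> R) : {set 'I_n} := [set i | y i == -1].

Definition pd_kernel p (K : 'rV[R]_p -> 'rV[R]_p -> R) : Prop :=
  (forall a b, K a b = K b a) /\
  (forall m (z : 'I_m -> 'rV[R]_p) (c : 'I_m -> R),
      0 <= \sum_(l < m) \sum_(k < m) c l * c k * K (z l) (z k)).

Definition kernel_matrix p n (K : 'rV[R]_p -> 'rV[R]_p -> R) (x : 'I_n -> 'rV[R]_p)
  : 'M[R]_n := \matrix_(l, m) K (x l) (x m).

Definition kernel_rocsvm_obj n (lam : R) (y : 'I_n -> R) (Km : 'M[R]_n)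
  (theta : 'cV[R]_n) : R :=
  (#|Ipos y| * #|Ineg y|)%:R^-1 *
    \sum_(i in Ipos y) \sum_(j in Ineg y)
       pospart (1 - (theta^T *m (col i Km - col j Km)) 0 0)
  + lam / 2 * (theta^T *m Km *m theta) 0 0.

Definition linear_rocsvm_obj n r (lam : R) (y : 'I_n -> R) (V : 'M[R]_(n, r))
  (beta : 'cV[R]_r) : R :=
  (#|Ipos y| * #|Ineg y|)%:R^-1 *
    \sum_(i in Ipos y) \sum_(j in Ineg y)
       pospart (1 - (beta^T *m (row i V - row j V)^T) 0 0)
  + lam / 2 * (beta^T *m beta) 0 0.

Definition is_minimizer (T : Type) (f : T -> R) (t : T) : Prop :=
  forall t', f t <= f t'.

End Defs.

From HB Require Import structures.
From mathcomp Require Import all_boot all_order all_algebra.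
From mathcomp Require Import reals.
From mathcomp Require Import zify.
Set Implicit Arguments. Unset Strict Implicit.
Import Order.TTheory GRing.Theory Num.Theory.
Local Open Scope ring_scope.

(* With K = V V^T we have k_i = V v_i^T, so theta^T (k_i - k_j) and theta^T K theta
   depend on theta only through beta = V^T theta: the kernel objective is the linear
   one restricted to the column space of V^T.  Conversely every beta splits
   orthogonally as V^T u + w with V w = 0; the component w leaves every hinge term
   unchanged and adds lam/2 |w|^2 to the penalty, so a minimizer of the linear
   objective has w = 0 and lies in that column space. *)

Section SquaredNorm.
Variable R : realFieldType.

Lemma trmx_mul_self_sum n (w : 'cV[R]_n) : (w^T *m w) 0 0 = \sum_j w j 0 ^+ 2.
Proof. by rewrite !mxE; apply: eq_bigr => j _; rewrite mxE expr2. Qed.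

Lemma trmx_mul_self_ge0 n (w : 'cV[R]_n) : 0 <= (w^T *m w) 0 0.
Proof. by rewrite trmx_mul_self_sum; apply: sumr_ge0 => j _; apply: sqr_ge0. Qed.

Lemma trmx_mul_self_eq0 n (w : 'cV[R]_n) : ((w^T *m w) 0 0 == 0) = (w == 0).
Proof.
apply/idP/eqP => [|->]; last by rewrite mulmx0 mxE.
rewrite trmx_mul_self_sum => /eqP /psumr_eq0P w2_eq0.
apply/colP => j; rewrite mxE; apply/eqP; rewrite -sqrf_eq0.
by apply/eqP/w2_eq0 => // k _; apply: sqr_ge0.
Qed.

End SquaredNorm.

Section OrthogonalDecomposition.
Variables (R : realFieldType) (n r : nat) (V : 'M[R]_(n, r)).

Lemma capmx_kermx_tr : (V :&: kermx V^T)%MS == 0.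
Proof.
apply/rowV0P => v; rewrite sub_capmx => /andP[/submxP[D ->] /sub_kermxP DVVt0].
apply/trmx_inj/eqP; rewrite trmx0 -trmx_mul_self_eq0 trmxK.
by rewrite trmx_mul mulmxA DVVt0 mul0mx mxE.
Qed.

Lemma row_full_addsmx_kermx_tr : row_full (V + kermx V^T)%MS.
Proof.
apply/eqP; have := mxrank_sum_cap V (kermx V^T).
rewrite mxrank_ker mxrank_tr (eqP capmx_kermx_tr) mxrank0.
by have := rank_leq_col V; lia.
Qed.

Lemma trmx_range_kermx_decomp (beta : 'cV[R]_r) :
  exists (u : 'cV[R]_n) (w : 'cV[R]_r), beta = V^T *m u + w /\ V *m w = 0.
Proof.
have /sub_addsmxP[[u w] /= beta_uw] := submx_full beta^T row_full_addsmx_kermx_tr.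
exists u^T, (w *m kermx V^T)^T; split.
  by rewrite -trmx_mul -linearD /= -beta_uw trmxK.
by apply: trmx_inj; rewrite trmx_mul trmxK -mulmxA mulmx_ker mulmx0 trmx0.
Qed.

End OrthogonalDecomposition.

Lemma col_mul (R : pzSemiRingType) m n k (A : 'M[R]_(m, n)) (B : 'M[R]_(n, k)) i :
  col i (A *m B) = A *m col i B.
Proof. by apply/colP => l; rewrite !mxE; apply: eq_bigr => t _; rewrite !mxE. Qed.

Section RocSvm.
Variables (R : realType) (n r : nat) (lam : R) (y : 'I_n -> R) (V : 'M[R]_(n, r)).

Let obj := linear_rocsvm_obj lam y V.

Lemma kernel_rocsvm_obj_gram (theta : 'cV[R]_n) :
  kernel_rocsvm_obj lam y (V *m V^T) theta = obj (V^T *m theta).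
Proof.
rewrite /obj /linear_rocsvm_obj /kernel_rocsvm_obj trmx_mul trmxK !mulmxA.
congr (_ * _ + _); apply: eq_bigr => i _; apply: eq_bigr => j _.
by rewrite !col_mul -!tr_row -mulmxBr -linearB /= mulmxA.
Qed.

Lemma linear_rocsvm_objD_kermx (u : 'cV[R]_n) (w : 'cV[R]_r) :
  V *m w = 0 -> obj (V^T *m u + w) = obj (V^T *m u) + lam / 2 * (w^T *m w) 0 0.
Proof.
move=> Vw0; rewrite /obj /linear_rocsvm_obj -addrA; congr (_ * _ + _).
  apply: eq_bigr => i _; apply: eq_bigr => j _.
  have hinge_w0 : w^T *m (row i V - row j V)^T = 0.
    by rewrite -trmx_mul mulmxBl -!row_mul Vw0 !row0 subrr trmx0.
  by rewrite linearD /= mulmxDl hinge_w0 addr0.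
have uw0 : (V^T *m u)^T *m w = 0 by rewrite trmx_mul trmxK -mulmxA Vw0 mulmx0.
have wu0 : w^T *m (V^T *m u) = 0 by rewrite mulmxA -trmx_mul Vw0 trmx0 mul0mx.
by rewrite -mulrDr mulmxDr linearD /= !mulmxDl uw0 wu0 addr0 add0r !mxE.
Qed.

Lemma linear_rocsvm_obj_trmx_range_le (beta : 'cV[R]_r) :
  0 <= lam -> exists u : 'cV[R]_n, obj (V^T *m u) <= obj beta.
Proof.
move=> lam_ge0; have [u [w [-> Vw0]]] := trmx_range_kermx_decomp V beta.
exists u; rewrite linear_rocsvm_objD_kermx // lerDl.
by rewrite mulr_ge0 ?divr_ge0 ?trmx_mul_self_ge0.
Qed.

Lemma linear_rocsvm_minimizer_trmx_range (beta : 'cV[R]_r) :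
  0 < lam -> is_minimizer obj beta -> exists u : 'cV[R]_n, V^T *m u = beta.
Proof.
move=> lam_gt0 beta_min; have [u [w [beta_uw Vw0]]] := trmx_range_kermx_decomp V beta.
exists u; suff /eqP w0 : w == 0 by rewrite beta_uw w0 addr0.
have := beta_min (V^T *m u); rewrite beta_uw linear_rocsvm_objD_kermx // gerDl.
rewrite pmulr_rle0 ?divr_gt0 // => w2_le0.
by rewrite -trmx_mul_self_eq0 eq_le w2_le0 trmx_mul_self_ge0.
Qed.

End RocSvm.

Theorem proposition1 (R : realType) (n p r : nat)
  (x : 'I_n -> 'rV[R]_p) (y : 'I_n -> R) (lam : R)
  (K : 'rV[R]_p -> 'rV[R]_p -> R) (V : 'M[R]_(n, r)) :
  (forall i, y i = 1 \/ y i = -1) ->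
  0 < lam ->
  pd_kernel K ->
  kernel_matrix K x = V *m V^T ->
  (* the substitution beta = V^T theta transforms one objective into the other *)
  (forall theta : 'cV[R]_n,
     kernel_rocsvm_obj lam y (kernel_matrix K x) theta
     = linear_rocsvm_obj lam y V (V^T *m theta)) /\
  (* theta solves the kernel problem iff V^T theta solves the linear problem *)
  (forall theta : 'cV[R]_n,
     is_minimizer (kernel_rocsvm_obj lam y (kernel_matrix K x)) theta <->
     is_minimizer (linear_rocsvm_obj lam y V) (V^T *m theta)) /\
  (* every solution of the linear problem arises this way *)
  (forall beta : 'cV[R]_r,
     is_minimizer (linear_rocsvm_obj lam y V) beta ->
     exists theta : 'cV[R]_n, V^T *m theta = beta).
Proof.
move=> _ lam_gt0 _ ->; split; first exact: kernel_rocsvm_obj_gram.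
split; last by move=> beta; apply: linear_rocsvm_minimizer_trmx_range.
move=> theta; split => [theta_min beta | Vtheta_min theta'].
  have [u /(le_trans _)] := linear_rocsvm_obj_trmx_range_le y V beta (ltW lam_gt0).
  by apply; rewrite -!kernel_rocsvm_obj_gram.
by rewrite !kernel_rocsvm_obj_gram.
Qed.
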